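(* Let $p$ be any prime and $k$ a field of characteristic $p$. Then $L_1\neq L_2$.
   Context: Let $X=\{x_1,x_2,\ldots\}$ be a countably infinite set and let $k_0\langle X\rangle$ denote the free associative $k$-algebra (without identity) on $X$. A $T$-space of $k_0\langle X\rangle$ is a $k$-linear subspace closed under every algebra endomorphism of $k_0\langle X\rangle$; the $T$-space generated by a subset is the smallest $T$-space containing it. Let $L_1$ be the $T$-space generated by $x_1^p$, and let $L_2$ be the $T$-space generated by $L_1$ together with all products $u\,v^p$ with $u\in L_1$, $v\in k_0\langle X\rangle$ (equivalently, the $T$-space generated by $x_1^p$ and $x_1^px_2^p$). *)

From mathcomp Require Import all_boot all_algebra.
Set Implicit Arguments. Unset Strict Implicit. Unset Printing Implicit Defensive.
Import GRing.Theory.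
Local Open Scope ring_scope.

(* The free associative k-algebra without identity k_0<X> on X = {x_0, x_1, ...}
   (variables indexed by nat; the paper's x_1, x_2 are our x_0, x_1).
   An element is represented by its coefficient function on words
   (words = seq nat), with finite support and zero coefficient on the empty word. *)
Section FreeAlg.
Variable k : fieldType.

Definition poly_t := seq nat -> k.

Definition inFA (f : poly_t) : Prop :=
  f [::] = 0 /\ exists s : seq (seq nat), forall w, f w != 0 -> w \in s.

Definition fa_zero : poly_t := fun _ => 0.
Definition fa_add (f g : poly_t) : poly_t := fun w => f w + g w.
Definition fa_scale (a : k) (f : poly_t) : poly_t := fun w => a * f w.
Definition fa_mul (f g : poly_t) : poly_t := fun w =>
  \sum_(i < (size w).+1) f (take i w) * g (drop i w).
Definition fa_var (i : nat) : poly_t := fun w => (w == [:: i])%:R.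
Definition fa_pow (f : poly_t) (n : nat) : poly_t := iter n.-1 (fa_mul f) f.

Definition fa_endo (phi : poly_t -> poly_t) : Prop :=
  (forall f, inFA f -> inFA (phi f)) /\
  (forall a f g, inFA f -> inFA g ->
     phi (fa_add (fa_scale a f) g) = fa_add (fa_scale a (phi f)) (phi g)) /\
  (forall f g, inFA f -> inFA g -> phi (fa_mul f g) = fa_mul (phi f) (phi g)).

Definition T_space (S : poly_t -> Prop) : Prop :=
  (forall f, S f -> inFA f) /\
  S fa_zero /\
  (forall a f g, S f -> S g -> S (fa_add (fa_scale a f) g)) /\
  (forall phi, fa_endo phi -> forall f, S f -> S (phi f)).

Definition T_gen (G : poly_t -> Prop) (f : poly_t) : Prop :=
  inFA f /\ forall S, T_space S -> (forall g, G g -> S g) -> S f.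

Definition L1 (p : nat) : poly_t -> Prop :=
  T_gen (fun g => g = fa_pow (fa_var 0) p).

Definition L2 (p : nat) : poly_t -> Prop :=
  T_gen (fun g => L1 p g \/
           exists u v, L1 p u /\ inFA v /\ g = fa_mul u (fa_pow v p)).

End FreeAlg.

From HB Require Import structures.
From mathcomp Require Import all_boot all_algebra.
From mathcomp Require Import boolp.
From mathcomp Require Import zify.
Set Implicit Arguments. Unset Strict Implicit. Unset Printing Implicit Defensive.
Import GRing.Theory.
Local Open Scope ring_scope.

(* Let [lambda f] be the sum of the coefficients of [f] at the cyclic rotations of
   the word [w = x_1^p x_2^p].  It is a trace, and in characteristic [p] every
   trace satisfies [tau ((a + b)^p) = tau (a^p) + tau (b^p)]; expanding [g] into
   monomials gives [lambda (g^p) = sum_u c_u^p lambda (u^p) = 0], since no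
   rotation of [w] is a [p]-th power of a word.  So the T-space of all [f] with
   [lambda (phi f) = 0] for every endomorphism [phi] contains [L_1], whereas
   [lambda w = 1] because no nontrivial rotation fixes [w]. *)

Section TraceFrobenius.
Variables (R : pzRingType) (k : fieldType) (n : nat) (tau : R -> k).
Hypothesis pchar_k : n.+1 \in [pchar k].
Hypothesis tauD : {morph tau : x y / x + y}.
Hypothesis tauC : forall x y, tau (x * y) = tau (y * x).
Variables x y : R.

Local Notation word := {ffun 'I_n.+1 -> bool}.

Let letter (b : bool) := if b then y else x.
Let word_prod (f : word) := \prod_(i < n.+1) letter (f i).
Let count_y (f : word) := (\sum_(i < n.+1) (f i : nat))%N.
Let rot1 (f : word) : word := [ffun i => f (ordS i)].
Let const_word (b : bool) : word := [ffun => b].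

Lemma trace0 : tau 0 = 0.
Proof. by apply: (addrI (tau 0)); rewrite -tauD !addr0. Qed.

Lemma trace_sum I r (P : pred I) F :
  tau (\sum_(i <- r | P i) F i) = \sum_(i <- r | P i) tau (F i).
Proof. exact: (big_morph tau tauD trace0). Qed.

Lemma expD_word_sum : (x + y) ^+ n.+1 = \sum_f word_prod f.
Proof.
rewrite -{1}[n.+1]card_ord -prodr_const.
rewrite (eq_bigr (fun i => \sum_(b : bool) letter b)); last first.
  by move=> i _; rewrite big_bool /= addrC.
by rewrite bigA_distr_bigA.
Qed.

Lemma count_y_rot1 f : count_y (rot1 f) = count_y f.
Proof.
rewrite /count_y [RHS](reindex_inj (@ordS_inj n.+1)) /=.
by apply: eq_bigr => i _; rewrite ffunE.
Qed.

Lemma trace_word_prod_rot1 f : tau (word_prod (rot1 f)) = tau (word_prod f).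
Proof.
rewrite /word_prod big_ord_recr big_ord_recl /= tauC; congr (tau (_ * _)).
  by rewrite ffunE; congr (letter (f _)); apply: val_inj; rewrite /= modnn.
apply: eq_bigr => i _; rewrite ffunE; congr (letter (f _)); apply: val_inj => /=.
by rewrite modn_small // ltnS.
Qed.

Lemma rot1_inj : injective rot1.
Proof.
move=> f g /ffunP E; apply/ffunP => i.
by have := E (ord_pred i); rewrite !ffunE ord_predK.
Qed.

(* Each mixed word, with [c] letters [y] where [0 < c < p], is split evenly over
   its [c] positions carrying [y].  The total weight at position [i] does not
   depend on [i] since [rot1] permutes the words, so the whole sum is [p] times
   the weight at position [0], which vanishes in characteristic [p]. *)
Lemma trace_mixed_words :
  \sum_(f | (0 < count_y f < n.+1)%N) tau (word_prod f) = 0.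
Proof.
pose share f := ((0 < count_y f < n.+1)%N%:R / (count_y f)%:R * tau (word_prod f)).
have share_rot1 f : share (rot1 f) = share f.
  by rewrite /share count_y_rot1 trace_word_prod_rot1.
pose weight (i : 'I_n.+1) := \sum_(f : word) (f i)%:R * share f.
have weight_ordS i : weight (ordS i) = weight i.
  rewrite /weight [RHS](reindex_inj rot1_inj) /=.
  by apply: eq_bigr => f _; rewrite share_rot1 ffunE.
have weight_const i : weight i = weight ord0.
  case: i => m; elim: m => [|m IH] lt; first by congr weight; apply: val_inj.
  rewrite -(IH (ltnW lt)) -[RHS]weight_ordS; congr weight; apply: val_inj => /=.
  by rewrite modn_small.
transitivity (\sum_(i < n.+1) weight i).
  rewrite /weight exchange_big big_mkcond /=; apply: eq_bigr => f _.
  rewrite -big_distrl /= -natr_sum -/(count_y f) /share.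
  case: (boolP (0 < count_y f < n.+1)%N) => [/andP[c_gt0 c_lt]|] /=.
    rewrite !mul1r mulrA mulfV ?mul1r // -(dvdn_pcharf pchar_k).
    by rewrite gtnNdvd.
  by rewrite !mul0r mulr0.
rewrite (eq_bigr (fun _ => weight ord0)) => [|i _]; last exact: weight_const.
by rewrite sumr_const card_ord -mulr_natl (pcharf0 pchar_k) mul0r.
Qed.

Lemma count_y_leqif f : (count_y f <= n.+1 ?= iff (f == const_word true))%N.
Proof.
have -> : (f == const_word true) = [forall i, f i].
  apply/eqP/forallP => [-> i | all_y]; first by rewrite ffunE.
  by apply/ffunP => i; rewrite ffunE all_y.
rewrite -[X in (_ <= X ?= iff _)%N]card_ord -sum1_card.
by apply: leqif_sum => i _; case: (f i).
Qed.

Lemma count_y_eq0 f : (count_y f == 0)%N = (f == const_word false).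
Proof.
rewrite sum_nat_eq0; apply/forallP/eqP => [no_y | ->]; last by move=> i; rewrite ffunE.
by apply/ffunP => i; rewrite ffunE; move/eqP: (no_y i); case: (f i).
Qed.

Lemma word_mixedE f :
  (0 < count_y f < n.+1)%N = (f != const_word true) && (f != const_word false).
Proof.
have [c_le c_eq] := count_y_leqif f.
by rewrite lt0n count_y_eq0 andbC ltn_neqAle c_le c_eq andbT.
Qed.

Lemma trace_const_word b : tau (word_prod (const_word b)) = tau (letter b ^+ n.+1).
Proof.
rewrite /word_prod (eq_bigr (fun _ => letter b)) => [|i _]; last by rewrite ffunE.
by rewrite prodr_const card_ord.
Qed.

Lemma trace_expD_pchar_succ :
  tau ((x + y) ^+ n.+1) = tau (x ^+ n.+1) + tau (y ^+ n.+1).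
Proof.
have const_neq : const_word false != const_word true.
  by apply/eqP => /ffunP/(_ ord0); rewrite !ffunE.
rewrite expD_word_sum trace_sum (bigD1 (const_word true)) //=.
rewrite (bigD1 (const_word false)) //= addrA.
rewrite (eq_bigl _ _ (fun f => esym (word_mixedE f))) trace_mixed_words addr0.
by rewrite !trace_const_word addrC.
Qed.

End TraceFrobenius.

Lemma trace_expD_pchar (R : pzRingType) (k : fieldType) (p : nat) (tau : R -> k) :
    p \in [pchar k] -> {morph tau : x y / x + y} ->
    (forall x y, tau (x * y) = tau (y * x)) ->
  forall x y, tau ((x + y) ^+ p) = tau (x ^+ p) + tau (y ^+ p).
Proof.
case: p => [/pcharf_prime // | n pchar_k tauD tauC x y].
exact: trace_expD_pchar_succ.
Qed.

Lemma take_eq_nil (T : eqType) i (w : seq T) :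
  (i <= size w)%N -> (take i w == [::]) = (i == 0)%N.
Proof. by move=> i_le; rewrite -size_eq0 size_take_min (minn_idPl i_le). Qed.

Lemma drop_eq_nil (T : eqType) i (w : seq T) :
  (i <= size w)%N -> (drop i w == [::]) = (i == size w).
Proof. by move=> i_le; rewrite -size_eq0 size_drop subn_eq0 eqn_leq i_le. Qed.

Lemma big_ord_shift_mkcond (V : nmodType) (a N : nat) (F : nat -> V) : (a <= N)%N ->
  \sum_(j < N - a) F (j + a)%N = \sum_(b < N) (if (a <= b)%N then F b else 0).
Proof.
move=> a_le; rewrite -big_mkcond /=.
rewrite -(@big_mkord _ _ _ (N - a)%N (fun _ => true) (fun i => F (i + a)%N)).
rewrite -(big_addn 0%N N a (fun _ => true) F) add0n big_geq_mkord.
by apply: eq_bigl.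
Qed.

Lemma big_ord_widen_mkcond (V : nmodType) (b N : nat) (F : nat -> V) : (b < N)%N ->
  \sum_(a < b.+1) F a = \sum_(a < N) (if (a <= b)%N then F a else 0).
Proof.
by move=> b_lt; rewrite -big_mkcond /= (big_ord_widen N F b_lt); apply: eq_bigl.
Qed.

(* [poly_t k] with the concatenation product is the algebra of noncommutative
   formal power series (with constant term) over [k]; [k_0<X>] is the subspace
   cut out by [inFA]. *)
Section SeriesRing.
Variable k : fieldType.

Definition ncseries := poly_t k.
HB.instance Definition _ := gen_eqMixin ncseries.
HB.instance Definition _ := gen_choiceMixin ncseries.

Definition fa_opp (f : ncseries) : ncseries := fun w => - f w.

Lemma fa_addA : associative (@fa_add k).
Proof. by move=> f g h; apply: funext => w; rewrite /fa_add addrA. Qed.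

Lemma fa_addC : commutative (@fa_add k).
Proof. by move=> f g; apply: funext => w; rewrite /fa_add addrC. Qed.

Lemma fa_add0 : left_id (@fa_zero k) (@fa_add k).
Proof. by move=> f; apply: funext => w; rewrite /fa_add /fa_zero add0r. Qed.

Lemma fa_addN : left_inverse (@fa_zero k) fa_opp (@fa_add k).
Proof. by move=> f; apply: funext => w; rewrite /fa_add /fa_zero /fa_opp addNr. Qed.

HB.instance Definition _ :=
  GRing.isZmodule.Build ncseries fa_addA fa_addC fa_add0 fa_addN.

Definition ncconst (a : k) : ncseries := fun w => (w == [::])%:R * a.

Lemma fa_mul_const a (f : ncseries) : fa_mul (ncconst a) f = fa_scale a f.
Proof.
apply: funext => w; rewrite /fa_mul /ncconst big_ord_recl /= take0 drop0 eqxx mul1r.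
by rewrite big1 ?addr0 // => i _; rewrite take_eq_nil ?mul0r.
Qed.

Lemma fa_mul_const_r a (f : ncseries) : fa_mul f (ncconst a) = fa_scale a f.
Proof.
apply: funext => w; rewrite /fa_mul /ncconst big_ord_recr /= drop_size take_size.
rewrite eqxx mul1r mulrC big1 ?add0r // => i _.
by rewrite drop_eq_nil ?(ltn_eqF (ltn_ord i)) ?mul0r ?mulr0 // ltnW.
Qed.

Lemma fa_mul1 : left_id (ncconst 1) (@fa_mul k).
Proof.
by move=> f; rewrite fa_mul_const; apply: funext => w; rewrite /fa_scale mul1r.
Qed.

Lemma fa_mulr1 : right_id (ncconst 1) (@fa_mul k).
Proof.
by move=> f; rewrite fa_mul_const_r; apply: funext => w; rewrite /fa_scale mul1r.
Qed.

Lemma fa_mulDl : left_distributive (@fa_mul k) (@fa_add k).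
Proof.
move=> f g h; apply: funext => w; rewrite /fa_mul /fa_add -big_split /=.
by apply: eq_bigr => i _; rewrite mulrDl.
Qed.

Lemma fa_mulDr : right_distributive (@fa_mul k) (@fa_add k).
Proof.
move=> f g h; apply: funext => w; rewrite /fa_mul /fa_add -big_split /=.
by apply: eq_bigr => i _; rewrite mulrDr.
Qed.

(* Both sides are the sum over cuts [a <= b] of [w] of f(w[0,a)) g(w[a,b)) h(w[b,..)). *)
Lemma fa_mulA : associative (@fa_mul k).
Proof.
move=> f g h; apply: funext => w; rewrite /fa_mul.
set N := (size w).+1.
pose T (a b : nat) := f (take a w) * g (take (b - a) (drop a w)) * h (drop b w).
transitivity (\sum_(a < N) \sum_(b < N) (if (a <= b)%N then T a b else 0)).
  apply: eq_bigr => a _; rewrite size_drop big_distrr /=.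
  have a_le : (a <= size w)%N by rewrite -ltnS.
  rewrite -subSn // -(@big_ord_shift_mkcond _ a N (T a)); last exact: ltnW.
  by apply: eq_bigr => j _; rewrite /T addnK drop_drop mulrA.
rewrite exchange_big /=; apply: eq_bigr => b _.
have b_le : (b <= size w)%N by rewrite -ltnS.
rewrite big_distrl /= size_takel // (@big_ord_widen_mkcond _ b N
  (fun a => f (take a (take b w)) * g (drop a (take b w)) * h (drop b w))) //.
apply: eq_bigr => a _; case: (leqP a b) => // a_le.
by rewrite /T take_takel // take_drop subnK.
Qed.

HB.instance Definition _ :=
  GRing.Zmodule_isPzRing.Build ncseries fa_mulA fa_mul1 fa_mulr1 fa_mulDl fa_mulDr.

Lemma ncseries_mulE (f g : ncseries) : f * g = fa_mul f g.
Proof. by []. Qed.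

Lemma ncseries_sumE I (r : seq I) (P : pred I) (F : I -> ncseries) w :
  (\sum_(i <- r | P i) F i) w = \sum_(i <- r | P i) F i w.
Proof. by elim/big_rec2: _ => // i h1 h2 _ <-. Qed.

Lemma ncconst_comm a (f : ncseries) : GRing.comm (ncconst a) f.
Proof. by rewrite /GRing.comm !ncseries_mulE fa_mul_const fa_mul_const_r. Qed.

Lemma ncconst_exp a n : ncconst a ^+ n = ncconst (a ^+ n).
Proof.
elim: n => [|n IH]; first by rewrite !expr0.
rewrite exprS IH ncseries_mulE fa_mul_const.
by apply: funext => w; rewrite /fa_scale /ncconst exprS mulrCA mulrA.
Qed.

Definition ncmono (u : seq nat) : ncseries := fun w => (w == u)%:R.

Lemma ncmono_mul u v : ncmono u * ncmono v = ncmono (u ++ v).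
Proof.
apply: funext => w; rewrite ncseries_mulE /fa_mul /ncmono.
have cut_eq (i : nat) : (i < (size w).+1)%N ->
    ((take i w == u) && (drop i w == v)) = ((i == size u) && (w == u ++ v)).
  move=> i_lt; apply/andP/andP => [[/eqP <- /eqP <-]|[/eqP -> /eqP ->]].
    by rewrite cat_take_drop size_takel // -ltnS.
  by rewrite take_size_cat // drop_size_cat.
under eq_bigr => i _ do rewrite -natrM mulnb (cut_eq _ (ltn_ord i)).
have [w_eq|w_neq] := eqVneq w (u ++ v); last first.
  by rewrite big1 // => i _; rewrite andbF.
have u_lt : (size u < (size w).+1)%N by rewrite ltnS w_eq size_cat leq_addr.
under eq_bigr => i _ do rewrite andbT.
rewrite (bigD1 (Ordinal u_lt)) //= eqxx big1 ?addr0 // => i i_neq.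
by case: eqP => // i_eq; case/eqP: i_neq; apply: val_inj.
Qed.

Lemma ncmono_exp u n : ncmono u ^+ n = ncmono (flatten (nseq n u)).
Proof.
elim: n => [|n IH]; last by rewrite exprS IH ncmono_mul.
by apply: funext => w; rewrite expr0 -[1]/(ncconst 1) /ncconst mulr1.
Qed.

Lemma inFA_ncmono_sum (g : ncseries) : inFA g ->
  exists s : seq (seq nat), g = \sum_(u <- s) ncconst (g u) * ncmono u.
Proof.
case=> _ [s supp_g]; exists (undup s); apply: funext => w; rewrite ncseries_sumE.
under eq_bigr => u _ do rewrite ncseries_mulE fa_mul_const /fa_scale /ncmono.
case: (boolP (w \in undup s)) => w_in.
  rewrite (bigD1_seq w) ?undup_uniq //= eqxx mulr1 big1 ?addr0 // => u u_neq.
  by rewrite eq_sym (negbTE u_neq) mulr0.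
rewrite big1_seq => [|u /andP[_ u_in]]; last first.
  have [w_eq|_] := eqVneq w u; last by rewrite mulr0n mulr0.
  by rewrite w_eq u_in in w_in.
by apply/eqP; apply: contraR w_in => /supp_g; rewrite mem_undup.
Qed.

End SeriesRing.

Lemma sum_rot_rot1 (T : Type) (V : nmodType) (F : seq T -> V) (w : seq T) :
  \sum_(j < size w) F (rot j (rot 1 w)) = \sum_(j < size w) F (rot j w).
Proof.
case E: (size w) => [|m]; first by rewrite !big_ord0.
rewrite big_ord_recr [RHS]big_ord_recl /= addrC; congr (_ + _).
  by rewrite -rotD ?addn1 ?E // -E rot_size rot0.
apply: eq_bigr => j _; rewrite /bump /= add1n -rotD ?addn1 // E ltnS.
exact: ltnW.
Qed.

Lemma sum_rot_rot (T : Type) (V : nmodType) (F : seq T -> V) (w : seq T) i :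
  \sum_(j < size w) F (rot j (rot i w)) = \sum_(j < size w) F (rot j w).
Proof.
elim: i => [|i IH]; first by rewrite rot0.
have [i_lt|i_ge] := ltnP i (size w); last by rewrite !rot_oversize // leqW.
by rewrite -add1n rotD ?add1n // -[in LHS](size_rot i w) sum_rot_rot1 size_rot IH.
Qed.

Section CyclicCoefficient.
Variable k : fieldType.
Local Notation ncseries := (ncseries k).

Definition cyc_coef (w : seq nat) (f : ncseries) := \sum_(j < size w) f (rot j w).

Lemma cyc_coefD w : {morph cyc_coef w : f g / f + g}.
Proof. by move=> f g; rewrite /cyc_coef -big_split. Qed.

Lemma cyc_coef_lin w a (f g : ncseries) :
  cyc_coef w (fa_add (fa_scale a f) g) = a * cyc_coef w f + cyc_coef w g.
Proof. by rewrite /cyc_coef mulr_sumr -big_split. Qed.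

Lemma cyc_coef_const_mul w a (f : ncseries) :
  cyc_coef w (ncconst a * f) = a * cyc_coef w f.
Proof. by rewrite ncseries_mulE fa_mul_const /cyc_coef mulr_sumr. Qed.

Lemma cyc_coef_ncmono w u : cyc_coef w (ncmono k u) = \sum_(j < size w) (rot j w == u)%:R.
Proof. by []. Qed.

Lemma cyc_coefC w (f g : ncseries) : cyc_coef w (f * g) = cyc_coef w (g * f).
Proof.
rewrite /cyc_coef !ncseries_mulE /fa_mul.
under eq_bigr => j _ do rewrite size_rot.
under [RHS]eq_bigr => j _ do rewrite size_rot.
rewrite exchange_big [RHS]exchange_big [RHS](reindex_inj rev_ord_inj) /=.
apply: eq_bigr => i _; rewrite subSS.
rewrite -(sum_rot_rot (fun r => g (take (size w - i) r) * f (drop (size w - i) r)) w i).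
apply: eq_bigr => j _.
have size_drop_rot : size (drop i (rot j w)) = (size w - i)%N.
  by rewrite size_drop size_rot.
by rewrite rot_rot [rot i _]/rot take_size_cat // drop_size_cat // mulrC.
Qed.

Lemma cyc_coef_exp_pchar_eq0 (p : nat) (w : seq nat) (g : ncseries) :
    p \in [pchar k] -> (forall j u, rot j w != flatten (nseq p u)) -> inFA g ->
  cyc_coef w (g ^+ p) = 0.
Proof.
move=> pchar_k no_pow /inFA_ncmono_sum[s ->].
elim: s => [|u s IH].
  rewrite big_nil expr0n (gtn_eqF (prime_gt0 (pcharf_prime pchar_k))).
  by rewrite /cyc_coef big1.
rewrite big_cons (trace_expD_pchar pchar_k (@cyc_coefD w) (@cyc_coefC w)) IH addr0.
rewrite exprMn_comm; last exact: ncconst_comm.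
rewrite ncconst_exp cyc_coef_const_mul ncmono_exp cyc_coef_ncmono.
by rewrite big1 ?mulr0 // => j _; rewrite (negbTE (no_pow j u)).
Qed.

End CyclicCoefficient.

Lemma nth_rot (T : Type) (x0 : T) (s : seq T) j i :
  (j <= size s)%N -> (i < size s)%N -> nth x0 (rot j s) i = nth x0 s ((i + j) %% size s).
Proof.
move=> j_le i_lt; rewrite /rot nth_cat size_drop.
case: ltnP => i_j; first by rewrite nth_drop modn_small 1?addnC //; lia.
have -> : (i + j = i - (size s - j) + size s)%N by lia.
by rewrite modnDr modn_small ?nth_take //; lia.
Qed.

Lemma rot_nseq_cat_neq (T : eqType) (a b : T) m j :
    a != b -> (0 < j < m + m)%N ->
  rot j (nseq m a ++ nseq m b) != nseq m a ++ nseq m b.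
Proof.
move=> a_neq_b /andP[j_gt0 j_lt]; apply/eqP => rot_eq.
have b_neq_a : b != a by rewrite eq_sym.
set w := nseq m a ++ nseq m b in rot_eq.
have size_w : size w = (m + m)%N by rewrite size_cat !size_nseq.
have nth_w i : (i < m + m)%N -> nth a w i = if (i < m)%N then a else b.
  move=> i_lt; rewrite nth_cat size_nseq; case: ltnP => i_m; rewrite nth_nseq ?i_m //.
  by have -> : (i - m < m)%N by lia.
have nth_rot_w i : (i < m + m)%N -> nth a (rot j w) i = nth a w ((i + j) %% (m + m)).
  by move=> i_lt; rewrite nth_rot size_w // ltnW.
have head : nth a w j = nth a w 0.
  by rewrite -[in RHS]rot_eq nth_rot_w ?add0n ?modn_small //; lia.
have last : nth a w j.-1 = nth a w (m + m).-1.
  rewrite -[in RHS]rot_eq nth_rot_w; last by lia.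
  have -> : ((m + m).-1 + j = j.-1 + (m + m))%N by lia.
  by rewrite modnDr modn_small //; lia.
rewrite !nth_w in head last; try lia.
have m_gt0 : (0 < m)%N by lia.
have m_le : ((m + m).-1 < m)%N = false by lia.
rewrite m_gt0 in head; rewrite m_le in last.
case: (ltnP j m) head => [j_lt_m _ | _ /eqP]; last by rewrite (negbTE b_neq_a).
have j1_lt : (j.-1 < m)%N by lia.
by move: last; rewrite j1_lt => /eqP; rewrite (negbTE a_neq_b).
Qed.

Lemma rot_size_flatten_nseq (T : Type) (u : seq T) n :
  rot (size u) (flatten (nseq n u)) = flatten (nseq n u).
Proof.
case: n => [|n] //.
rewrite /= rot_size_cat; elim: n => [|n IH]; first by rewrite cats0.
by rewrite /= -catA IH.
Qed.

(* A power [u^m] of a word of length [2] is fixed by [rot 2], and [rot 2] moves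
   the word [a^m b^m] when [1 < m]. *)
Lemma rot_nseq_cat_neq_pow (T : eqType) (a b : T) m j (u : seq T) :
    a != b -> (1 < m)%N ->
  rot j (nseq m a ++ nseq m b) != flatten (nseq m u).
Proof.
move=> a_neq_b m_gt1; apply/eqP => rot_eq.
set w := nseq m a ++ nseq m b in rot_eq.
have size_u : size u = 2%N.
  have := congr1 size rot_eq; rewrite size_rot size_cat !size_nseq size_flatten.
  rewrite /shape map_nseq sumn_nseq => size_eq.
  by apply/eqP; rewrite -(eqn_pmul2r (ltnW m_gt1)) -size_eq; apply/eqP; lia.
have : rot 2 w = w.
  apply: (@rot_inj j); rewrite rot_rot rot_eq -size_u; exact: rot_size_flatten_nseq.
apply/eqP; apply: rot_nseq_cat_neq => //; lia.
Qed.

Section FreeAlgebra.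
Variable k : fieldType.
Implicit Types f g : poly_t k.

Lemma inFA_zero : inFA (fa_zero k).
Proof. by split => //; exists [::] => w; rewrite eqxx. Qed.

Lemma inFA_lin a f g : inFA f -> inFA g -> inFA (fa_add (fa_scale a f) g).
Proof.
move=> [f0 [s supp_f]] [g0 [t supp_g]].
split; first by rewrite /fa_add /fa_scale f0 g0 mulr0 addr0.
exists (s ++ t) => w; rewrite mem_cat; apply: contraR => /norP[f_w g_w].
have /eqP f_w0 := contraNT (@supp_f w) f_w.
have /eqP g_w0 := contraNT (@supp_g w) g_w.
by rewrite /fa_add /fa_scale f_w0 g_w0 mulr0 addr0 eqxx.
Qed.

Lemma inFA_mul f g : inFA f -> inFA g -> inFA (fa_mul f g).
Proof.
move=> [f0 [s supp_f]] [g0 [t supp_g]].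
split; first by rewrite /fa_mul big_ord1 /= f0 mul0r.
exists [seq x ++ y | x <- s, y <- t] => w; apply: contraR => w_notin.
rewrite /fa_mul big1 // => i _.
have [->|/supp_f f_in] := eqVneq (f (take i w)) 0; first by rewrite mul0r.
have [->|/supp_g g_in] := eqVneq (g (drop i w)) 0; first by rewrite mulr0.
by case/negP: w_notin; rewrite -(cat_take_drop i w); apply: allpairs_f.
Qed.

Lemma inFA_var i : inFA (fa_var k i).
Proof.
split=> //; exists [:: [:: i]] => w.
by rewrite /fa_var mem_seq1; case: (w == [:: i]); rewrite ?eqxx.
Qed.

Lemma inFA_pow f n : inFA f -> inFA (fa_pow f n).
Proof. by move=> f_in; rewrite /fa_pow; elim: n.-1 => //= m IH; apply: inFA_mul. Qed.

Lemma fa_powE f n : (0 < n)%N -> fa_pow f n = (f : ncseries k) ^+ n.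
Proof.
case: n => // n _; rewrite /fa_pow /=.
by elim: n => [|n IH]; rewrite ?expr1 //= IH -ncseries_mulE -exprS.
Qed.

Lemma fa_pow_var i n : (0 < n)%N -> fa_pow (fa_var k i) n = ncmono k (nseq n i).
Proof.
move=> n_gt0; rewrite fa_powE // -[fa_var k i]/(ncmono k [:: i]) ncmono_exp.
by congr ncmono; elim: n {n_gt0} => //= n ->.
Qed.

Lemma endo_zero phi : fa_endo phi -> phi (fa_zero k) = fa_zero k.
Proof.
move=> [_ [phi_lin _]]; apply: funext => w.
have := congr1 (fun h => h w) (phi_lin 1 _ _ inFA_zero inFA_zero).
have -> : fa_add (fa_scale 1 (fa_zero k)) (fa_zero k) = fa_zero k.
  by apply: funext => v; rewrite /fa_add /fa_scale /fa_zero mulr0 addr0.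
rewrite /fa_add /fa_scale mul1r => phi0_eq.
by apply: (addrI (phi (fa_zero k) w)); rewrite -phi0_eq /fa_zero addr0.
Qed.

Lemma endo_pow phi f n : fa_endo phi -> inFA f -> phi (fa_pow f n) = fa_pow (phi f) n.
Proof.
move=> [_ [_ phi_mul]] f_in; rewrite /fa_pow.
elim: n.-1 => //= m IH; rewrite phi_mul ?IH //.
exact: (inFA_pow m.+1 f_in).
Qed.

Lemma endo_comp (phi psi : poly_t k -> poly_t k) :
  fa_endo phi -> fa_endo psi -> fa_endo (phi \o psi).
Proof.
move=> [phi_in [phi_lin phi_mul]] [psi_in [psi_lin psi_mul]]; split; [|split] => /=.
- by move=> f /psi_in /phi_in.
- by move=> a f g f_in g_in; rewrite psi_lin // phi_lin //; apply: psi_in.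
- by move=> f g f_in g_in; rewrite psi_mul // phi_mul //; apply: psi_in.
Qed.

End FreeAlgebra.

Section CyclicObstruction.
Variable k : fieldType.

(* The largest T-space contained in the kernel of [cyc_coef w]. *)
Definition cyc_coef_Tker (w : seq nat) (f : poly_t k) : Prop :=
  inFA f /\ forall phi, fa_endo phi -> cyc_coef w (phi f) = 0.

Lemma T_space_cyc_coef_Tker w : T_space (cyc_coef_Tker w).
Proof.
split; [by move=> f [] | split; [|split]].
- split; first exact: inFA_zero.
  by move=> phi phi_endo; rewrite endo_zero // /cyc_coef big1.
- move=> a f g [f_in f_ker] [g_in g_ker]; split; first exact: inFA_lin.
  move=> phi phi_endo; have [_ [phi_lin _]] := phi_endo.
  by rewrite phi_lin // cyc_coef_lin f_ker // g_ker // mulr0 addr0.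
- move=> psi psi_endo f [f_in f_ker]; split.
    by case: psi_endo => psi_in _; apply: psi_in.
  by move=> phi phi_endo; apply: (f_ker (phi \o psi)); apply: endo_comp.
Qed.

Lemma L1_cyc_coef_eq0 p w (f : ncseries k) :
    p \in [pchar k] -> (forall j u, rot j w != flatten (nseq p u)) ->
  L1 p f -> cyc_coef w f = 0.
Proof.
move=> pchar_k no_pow [_ f_gen].
have [_ f_ker] : cyc_coef_Tker w f.
  apply: f_gen (T_space_cyc_coef_Tker w) _ => _ ->.
  split=> [|phi phi_endo]; first exact/inFA_pow/inFA_var.
  have p_gt0 := prime_gt0 (pcharf_prime pchar_k).
  rewrite endo_pow ?fa_powE ?cyc_coef_exp_pchar_eq0 //; last exact: inFA_var.
  by case: phi_endo => phi_in _; apply/phi_in/inFA_var.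
exact: (f_ker id).
Qed.

Lemma L2_pow_var_mul p :
  L2 p (fa_mul (fa_pow (fa_var k 0) p) (fa_pow (fa_var k 1) p)).
Proof.
have pow_in i : inFA (fa_pow (fa_var k i) p) by apply/inFA_pow/inFA_var.
split; first exact: inFA_mul.
move=> S _ S_gen; apply: S_gen; right.
exists (fa_pow (fa_var k 0) p), (fa_var k 1).
by split; [split=> // T _; apply | split; first exact: inFA_var].
Qed.

Lemma cyc_coef_ncmono_self (w : seq nat) :
    (0 < size w)%N -> (forall j, (0 < j < size w)%N -> rot j w != w) ->
  cyc_coef w (ncmono k w) = 1.
Proof.
move=> w_gt0 rot_neq; rewrite cyc_coef_ncmono (bigD1 (Ordinal w_gt0)) //= rot0 eqxx.
rewrite big1 ?addr0 // => j j_neq; rewrite (negbTE (rot_neq j _)) //.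
by rewrite ltn_ord andbT lt0n; apply: contra j_neq => /eqP j0; apply/eqP/val_inj.
Qed.

Lemma cyc_coef_pow_var_mul m : (0 < m)%N ->
  cyc_coef (nseq m 0%N ++ nseq m 1%N)
    (fa_mul (fa_pow (fa_var k 0) m) (fa_pow (fa_var k 1) m) : ncseries k) = 1.
Proof.
move=> m_gt0; rewrite !fa_pow_var // -ncseries_mulE ncmono_mul.
rewrite cyc_coef_ncmono_self // size_cat !size_nseq ?addn_gt0 ?m_gt0 // => j.
exact: rot_nseq_cat_neq.
Qed.

End CyclicObstruction.

Theorem theorem5p2 (p : nat) (k : fieldType) (hp : prime p)
    (hchar : p \in [pchar k]) :
  ~ (forall f : poly_t k, L1 p f <-> L2 p f).
Proof.
move=> L1_eq_L2; have p_gt1 := prime_gt1 hp.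
have /eqP := L1_cyc_coef_eq0 (w := nseq p 0%N ++ nseq p 1%N) hchar
  (fun j u => rot_nseq_cat_neq_pow (a := 0%N) (b := 1%N) j u isT p_gt1)
  ((L1_eq_L2 _).2 (L2_pow_var_mul k p)).
by rewrite cyc_coef_pow_var_mul ?oner_eq0 // ltnW.
Qed.
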